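(* If $\Theta\cdot\Gamma\vdash P$ and $\Gamma'\leqslant\Gamma$, then $\Theta\cdot\Gamma'\vdash P$.
   Context: Session types: $S::=B\mid T$ ($B$ basic types such as int, bool, unit, with a given subtyping $<:$); $T::=p\&_{i\in I}m_i(S_i).T_i\mid p\oplus_{i\in I}m_i(S_i).T_i\mid\mu t.T\mid t\mid\mathbf{end}$ (external/internal choice from/to role $p$ with $I\neq\emptyset$ and distinct labels; closed, guarded recursion; the distinguished label $\mathtt{crash}$ never in internal choice); $U::=T\mid\mathbf{stop}$. Subtyping $\leqslant$ is the largest relation with: $B\leqslant B'$ if $B<:B'$; $\mathbf{end}\leqslant\mathbf{end}$; $\mathbf{stop}\leqslant\mathbf{stop}$; $p\oplus_{i\in I\cup J}m_i(S_i).T_i\leqslant p\oplus_{i\in I}m_i(S'_i).T'_i$ if $S'_i\leqslant S_i$ and $T_i\leqslant T'_i$ for $i\in I$; $p\&_{i\in I}m_i(S_i).T_i\leqslant p\&_{i\in I\cup J}m_i(S'_i).T'_i$ if $S_i\leqslant S'_i$, $T_i\leqslant T'_i$ for $i\in I$, and ($|I|=1$ implies $m_i\neq\mathtt{crash}$ or $J=\emptyset$); $\mu t.T\leqslant T'$ if $T\{\mu t.T/t\}\leqslant T'$; $T\leqslant\mu t.T'$ if $T\leqslant T'\{\mu t.T'/t\}$. Processes: $c::=x\mid s[p]$, $d::=v\mid c$; $P::=\mathbf 0\mid(\nu s{:}\Gamma')P\mid P\mid P\mid c[q]\oplus m\langle d\rangle.P\mid c[q]\&_{i\in I}m_i(x_i).P_i\mid\mathbf{def}\,X(\tilde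 x{:}\tilde S)=P\,\mathbf{in}\,P\mid X\langle\tilde d\rangle\mid\mathbf{err}\mid s[p]^{\dagger}$ (crashed endpoint). Typing contexts: $\Gamma$ maps variables to $S$ and endpoints $s[p]$ to $U$; $\Theta$ maps process variables to type tuples; $\Gamma'\leqslant\Gamma$ iff $\mathrm{dom}(\Gamma')=\mathrm{dom}(\Gamma)$ and $\Gamma'(c)\leqslant\Gamma(c)$ for all $c$. Typing rules: $\Theta\vdash X{:}\tilde S$ if $\Theta(X)=\tilde S$; $\emptyset\vdash v{:}B$ if $v\in B$; $c{:}S\vdash c{:}S'$ if $S\leqslant S'$; $\mathrm{end}(c_1{:}S_1..c_n{:}S_n)$ iff each $S_i$ is basic or $S_i\leqslant\mathbf{end}$. $\mathrm{end}(\Gamma)\Rightarrow\Theta\cdot\Gamma\vdash\mathbf 0$; $\mathrm{end}(\Gamma)\Rightarrow\Theta\cdot\Gamma,s[p]{:}\mathbf{stop}\vdash s[p]^{\dagger}$; $\Theta\cdot\Gamma_1\vdash P_1,\ \Theta\cdot\Gamma_2\vdash P_2\Rightarrow\Theta\cdot\Gamma_1,\Gamma_2\vdash P_1\mid P_2$; $\Gamma_1\vdash c{:}q\oplus m(S).T$, $\Gamma_2\vdash d{:}S$, $S\not\leqslant\mathbf{end}$, $\Theta\cdot\Gamma,c{:}T\vdash P\Rightarrow\Theta\cdot\Gamma,\Gamma_1,\Gamma_2\vdash c[q]\oplus m\langle d\rangle.P$; $\Gamma_1\vdash c{:}q\&_{i\in I}m_i(S_i).T_i$, $\forall i\ \Theta\cdot\Gamma,y_i{:}S_i,c{:}T_i\vdash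 P_i\Rightarrow\Theta\cdot\Gamma,\Gamma_1\vdash c[q]\&_{i\in I}m_i(y_i).P_i$; $\Theta,X{:}\tilde S\cdot\tilde x{:}\tilde S\vdash P$ and $\Theta,X{:}\tilde S\cdot\Gamma\vdash Q\Rightarrow\Theta\cdot\Gamma\vdash\mathbf{def}\,X(\tilde x{:}\tilde S)=P\,\mathbf{in}\,Q$; $\Theta\vdash X{:}S_1..S_n$, $\mathrm{end}(\Gamma_0)$, $\Gamma_i\vdash d_i{:}S_i$, $S_i\not\leqslant\mathbf{end}$ $\Rightarrow\Theta\cdot\Gamma_0,\Gamma_1..\Gamma_n\vdash X\langle d_1..d_n\rangle$; if $\Gamma'=\{s[p]{:}T_p\}_{p\in I}$ satisfies a given safety predicate (an $(s;R)$-safety property, for some set of roles $R$), $s$ does not occur in $\Gamma$, and $\Theta\cdot\Gamma,\Gamma'\vdash P$, then $\Theta\cdot\Gamma\vdash(\nu s{:}\Gamma')P$. *)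

From Stdlib Require Import List String Arith Permutation.
Import ListNotations.
Set Implicit Arguments.

Record basics := Basics {
  btype : Type;
  bsub  : btype -> btype -> Prop;
  vtype : Type;
  vhas  : vtype -> btype -> Prop
}.

Definition role := nat.
Definition label := string.
Definition crash : label := "crash"%string.
Definition session := nat.
Definition var := string.
Definition pvar := string.

(** Session types. Recursion variables are de Bruijn indices: [TVar 0]
    refers to the nearest enclosing [TMu]. Choices are lists of branches
    (label, payload sort, continuation). *)
Inductive stype (Bs : basics) : Type :=
| TExt : role -> list (label * sort Bs * stype Bs) -> stype Bs
| TInt : role -> list (label * sort Bs * stype Bs) -> stype Bs
| TMu  : stype Bs -> stype Bs
| TVar : nat -> stype Bs
| TEnd : stype Bs
with sort (Bs : basics) : Type :=
| SB : btype Bs -> sort Bs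
| ST : stype Bs -> sort Bs.

Arguments TEnd {Bs}.
Arguments TExt {Bs}.
Arguments TInt {Bs}.
Arguments TMu {Bs}.
Arguments TVar {Bs}.
Arguments SB {Bs}.
Arguments ST {Bs}.

Definition blabels (Bs : basics) (bs : list (label * sort Bs * stype Bs)) :
  list label := map (fun b => fst (fst b)) bs.

(** Substitution T{U/t} of a closed type U for the variable with index k
    (payload sorts are closed, so they are left unchanged). *)
Fixpoint tsubst (Bs : basics) (k : nat) (U : stype Bs) (T : stype Bs) : stype Bs :=
  match T with
  | TExt p bs => TExt p (map (fun b => (fst b, tsubst k U (snd b))) bs)
  | TInt p bs => TInt p (map (fun b => (fst b, tsubst k U (snd b))) bs)
  | TMu T' => TMu (tsubst (S k) U T')
  | TVar n => if n =? k then U else if k <? n then TVar (pred n) else TVar n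
  | TEnd => TEnd
  end.

Definition unfold_mu (Bs : basics) (T : stype Bs) : stype Bs := tsubst 0 (TMu T) T.

Fixpoint unguarded (Bs : basics) (T : stype Bs) : list nat :=
  match T with
  | TVar n => [n]
  | TMu T' => map pred (filter (fun n => negb (n =? 0)) (unguarded T'))
  | _ => []
  end.

Inductive wfT (Bs : basics) : nat -> stype Bs -> Prop :=
| wf_var d n : n < d -> wfT d (TVar n)
| wf_end d : wfT d TEnd
| wf_mu d T : wfT (S d) T -> ~ In 0 (unguarded T) -> wfT d (TMu T)
| wf_ext d p bs :
    bs <> [] -> NoDup (blabels bs) ->
    (forall m S T, In (m, S, T) bs -> wfS S) ->
    (forall m S T, In (m, S, T) bs -> wfT d T) ->
    wfT d (TExt p bs)
| wf_int d p bs :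
    bs <> [] -> NoDup (blabels bs) -> ~ In crash (blabels bs) ->
    (forall m S T, In (m, S, T) bs -> wfS S) ->
    (forall m S T, In (m, S, T) bs -> wfT d T) ->
    wfT d (TInt p bs)
with wfS (Bs : basics) : sort Bs -> Prop :=
| wfS_b b : wfS (SB b)
| wfS_t T : wfT 0 T -> wfS (ST T).

CoInductive subT (Bs : basics) : stype Bs -> stype Bs -> Prop :=
| st_end : subT TEnd TEnd
| st_int p bs bs' :
    (forall m S' T', In (m, S', T') bs' ->
       exists S T, In (m, S, T) bs /\ subS S' S /\ subT T T') ->
    subT (TInt p bs) (TInt p bs')
| st_ext p bs bs' :
    (forall m S T, In (m, S, T) bs ->
       exists S' T', In (m, S', T') bs' /\ subS S S' /\ subT T T') ->
    (List.length bs = 1 ->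
       (forall m S T, In (m, S, T) bs -> m <> crash)
       \/ incl (blabels bs') (blabels bs)) ->
    subT (TExt p bs) (TExt p bs')
| st_mul T T' : subT (unfold_mu T) T' -> subT (TMu T) T'
| st_mur T T' : subT T (unfold_mu T') -> subT T (TMu T')
with subS (Bs : basics) : sort Bs -> sort Bs -> Prop :=
| ss_b b b' : bsub Bs b b' -> subS (SB b) (SB b')
| ss_t T T' : subT T T' -> subS (ST T) (ST T').

Inductive cty (Bs : basics) : Type :=
| CS : sort Bs -> cty Bs
| CStop : cty Bs.
Arguments CStop {Bs}.

Inductive subC (Bs : basics) : cty Bs -> cty Bs -> Prop :=
| sc_s S S' : subS S S' -> subC (CS S) (CS S')
| sc_stop : subC CStop CStop.

Inductive chan : Type :=
| CVar : var -> chan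
| CEp  : session -> role -> chan.

Inductive dval (Bs : basics) : Type :=
| DV : vtype Bs -> dval Bs
| DC : chan -> dval Bs.

Definition ctx (Bs : basics) := list (chan * cty Bs).

Inductive proc (Bs : basics) : Type :=
| PNil : proc Bs
| PRes : session -> ctx Bs -> proc Bs -> proc Bs
| PPar : proc Bs -> proc Bs -> proc Bs
| PSend : chan -> role -> label -> dval Bs -> proc Bs -> proc Bs
| PBranch : chan -> role -> list (label * var * proc Bs) -> proc Bs
| PDef : pvar -> list (var * sort Bs) -> proc Bs -> proc Bs -> proc Bs
| PCall : pvar -> list (dval Bs) -> proc Bs
| PErr : proc Bs
| PCrashed : session -> role -> proc Bs.

(** Contexts as finite lists; Γ1,Γ2 is a disjoint union (up to ordering). *)
Definition dom (Bs : basics) (G : ctx Bs) : list chan := map fst G.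

Definition ctx_union (Bs : basics) (G : ctx Bs) (Gs : list (ctx Bs)) : Prop :=
  NoDup (dom (List.concat Gs)) /\ Permutation G (List.concat Gs).

Definition ctx_wf (Bs : basics) (G : ctx Bs) : Prop :=
  NoDup (dom G) /\
  forall c t, In (c, t) G ->
    (exists x S, c = CVar x /\ t = CS S /\ wfS S) \/
    (exists s p T, c = CEp s p /\ t = CS (ST T) /\ wfT 0 T) \/
    (exists s p, c = CEp s p /\ t = CStop).

Definition ctx_sub (Bs : basics) (G' G : ctx Bs) : Prop :=
  NoDup (dom G') /\ NoDup (dom G) /\
  (forall c, In c (dom G') <-> In c (dom G)) /\
  (forall c t' t, In (c, t') G' -> In (c, t) G -> subC t' t).

Definition is_end (Bs : basics) (t : cty Bs) : Prop :=
  match t with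
  | CS (SB _) => True
  | CS (ST T) => subT T TEnd
  | CStop => False
  end.

Definition end_ctx (Bs : basics) (G : ctx Bs) : Prop :=
  forall c t, In (c, t) G -> is_end t.

Definition theta (Bs : basics) := pvar -> option (list (sort Bs)).

Definition theta_upd (Bs : basics) (Th : theta Bs) (X : pvar) (Ss : list (sort Bs))
  : theta Bs := fun Y => if String.eqb Y X then Some Ss else Th Y.

Definition theta_wf (Bs : basics) (Th : theta Bs) : Prop :=
  forall X Ss, Th X = Some Ss -> forall S, In S Ss -> wfS S.

Inductive typd (Bs : basics) : ctx Bs -> dval Bs -> sort Bs -> Prop :=
| td_val v b : vhas Bs v b -> typd [] (DV Bs v) (SB b)
| td_chan c S S' : subS S S' -> typd [(c, CS S)] (DC Bs c) S'.

Inductive typ (Bs : basics) (safe : session -> ctx Bs -> Prop)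
  : theta Bs -> ctx Bs -> proc Bs -> Prop :=
| t_nil Th G :
    NoDup (dom G) -> end_ctx G -> typ safe Th G (PNil Bs)
| t_crashed Th G G0 s p :
    end_ctx G0 -> ctx_union G [G0; [(CEp s p, CStop)]] ->
    typ safe Th G (PCrashed Bs s p)
| t_par Th G G1 G2 P1 P2 :
    typ safe Th G1 P1 -> typ safe Th G2 P2 -> ctx_union G [G1; G2] ->
    typ safe Th G (PPar P1 P2)
| t_send Th G G0 G1 G2 c q m S T d P :
    typd G1 (DC Bs c) (ST (TInt q [(m, S, T)])) ->
    wfT 0 (TInt q [(m, S, T)]) ->
    typd G2 d S ->
    ~ subS S (ST TEnd) ->
    typ safe Th ((c, CS (ST T)) :: G0) P ->
    ctx_union G [G0; G1; G2] ->
    typ safe Th G (PSend c q m d P)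
| t_branch Th G G0 G1 c q tbs pbs :
    typd G1 (DC Bs c) (ST (TExt q tbs)) ->
    wfT 0 (TExt q tbs) ->
    List.length pbs = List.length tbs ->
    (forall i m y P m' S T, nth_error pbs i = Some (m, y, P) ->
       nth_error tbs i = Some (m', S, T) -> m = m') ->
    (forall i m y P m' S T, nth_error pbs i = Some (m, y, P) ->
       nth_error tbs i = Some (m', S, T) ->
       typ safe Th ((CVar y, CS S) :: (c, CS (ST T)) :: G0) P) ->
    ctx_union G [G0; G1] ->
    typ safe Th G (PBranch c q pbs)
| t_def Th G X params P Q :
    Th X = None ->
    (forall x S, In (x, S) params -> wfS S) ->
    typ safe (theta_upd Th X (map snd params))
        (map (fun xs => (CVar (fst xs), CS (snd xs))) params) P ->
    typ safe (theta_upd Th X (map snd params)) G Q ->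
    typ safe Th G (PDef X params P Q)
| t_call Th G X Ss G0 Gs ds :
    Th X = Some Ss ->
    end_ctx G0 ->
    List.length ds = List.length Ss -> List.length Gs = List.length Ss ->
    (forall i Gi d S, nth_error Gs i = Some Gi -> nth_error ds i = Some d ->
       nth_error Ss i = Some S -> typd Gi d S /\ ~ subS S (ST TEnd)) ->
    ctx_union G (G0 :: Gs) ->
    typ safe Th G (PCall X ds)
| t_res Th G s G' P :
    (forall c t, In (c, t) G' -> exists p T, c = CEp s p /\ t = CS (ST T)) ->
    ctx_wf G' ->
    safe s G' ->
    (forall p, ~ In (CEp s p) (dom G)) ->
    typ safe Th (G ++ G') P ->
    typ safe Th G (PRes s G' P).

(* Narrowing holds for the more flexible relation "Γ' is a permutation of a
   pointwise narrowing of Γ", which survives the splitting of context unions,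
   so it follows by induction on the typing derivation. The one real
   ingredient is transitivity of subtyping through a well-formed middle type,
   needed where a narrowed entry meets the subtyping premises of the value and
   end(·) judgements. It is proved coinductively: guarded recursion lets the
   middle type be unfolded until its head is a choice or end, and there the
   branches compose; the side condition on a lone crash branch composes
   because labels are distinct. *)

From Stdlib Require Import List String Arith Permutation Lia.
Import ListNotations.

Section WellFormedUnfolding.

Context {Bs : basics}.

Fixpoint mu_depth (T : stype Bs) : nat :=
  match T with TMu T' => S (mu_depth T') | _ => 0 end.

Lemma wfT_weaken d d' (T : stype Bs) : wfT d T -> d <= d' -> wfT d' T.
Proof.
  intros H; revert d'; induction H; intros d' Hd; constructor; eauto.
  - lia.
  - apply IHwfT; lia.
Qed.

Lemma wfT_unguarded_lt d (T : stype Bs) n : wfT d T -> In n (unguarded T) -> n < d.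
Proof.
  intros H; revert n; induction H; simpl; intros n0 Hn; try tauto.
  - destruct Hn as [<-|[]]; auto.
  - apply in_map_iff in Hn as [m [<- Hm]]. apply filter_In in Hm as [Hm Hz].
    apply IHwfT in Hm. destruct m; simpl in *; [discriminate|lia].
Qed.

Lemma unguarded_closed (T : stype Bs) : wfT 0 T -> unguarded T = [].
Proof.
  intros H. destruct (unguarded T) as [|n l] eqn:E; auto.
  exfalso. assert (n < 0) by (eapply wfT_unguarded_lt; [exact H|]; rewrite E; left; auto). lia.
Qed.

Lemma mu_depth_tsubst (T : stype Bs) k U :
  ~ In k (unguarded T) -> mu_depth (tsubst k U T) <= mu_depth T.
Proof.
  revert k; induction T; intros k H; simpl; try lia.
  - apply le_n_S, IHT. intro HI. apply H. simpl.
    change k with (pred (S k)). apply in_map, filter_In. split; auto.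
  - destruct (Nat.eqb_spec n k) as [->|_].
    + exfalso; apply H; simpl; auto.
    + destruct (k <? n); simpl; lia.
Qed.

Lemma in_unguarded_tsubst (T : stype Bs) k U n :
  unguarded U = [] -> In n (unguarded (tsubst k U T)) ->
  exists m, In m (unguarded T) /\ m <> k /\ n = (if k <? m then pred m else m).
Proof.
  revert k n; induction T; intros k n0 HU Hn; simpl in *; try tauto.
  - apply in_map_iff in Hn as [m1 [<- Hm1]]. apply filter_In in Hm1 as [Hm1 Hz].
    destruct (IHT (S k) m1 HU Hm1) as [[|m] [Hm [Hmk ->]]]; [discriminate|].
    exists m. split; [|split].
    + change m with (pred (S m)). apply in_map, filter_In. split; auto.
    + lia.
    + change (S k <? S m) with (k <? m). destruct (Nat.ltb_spec k m); simpl; lia.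
  - destruct (Nat.eqb_spec n k) as [_|Hnk].
    + rewrite HU in Hn; destruct Hn.
    + exists n. split; [auto|split; auto].
      destruct (k <? n); simpl in Hn; destruct Hn as [<-|[]]; auto.
Qed.

Lemma blabels_map (f : stype Bs -> stype Bs) bs :
  blabels (map (fun b : label * sort Bs * stype Bs => (fst b, f (snd b))) bs) = blabels bs.
Proof. unfold blabels. rewrite map_map. reflexivity. Qed.

Lemma in_map_branches (f : stype Bs -> stype Bs) bs m S T :
  In (m, S, T) (map (fun b : label * sort Bs * stype Bs => (fst b, f (snd b))) bs) ->
  exists T0, In (m, S, T0) bs /\ T = f T0.
Proof.
  intro H. apply in_map_iff in H as [[[m' S'] T0] [Heq Hin]].
  inversion Heq; subst. eauto.
Qed.

(* Guardedness survives substitution because the substituted type is closed,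
   so it contributes no unguarded variables. *)
Lemma wfT_tsubst d (T : stype Bs) k U :
  wfT d T -> k < d -> wfT 0 U -> wfT (pred d) (tsubst k U T).
Proof.
  intros H; revert k; induction H; intros k Hk HU; simpl.
  - destruct (Nat.eqb_spec n k).
    + eapply wfT_weaken; eauto; lia.
    + destruct (Nat.ltb_spec k n); constructor; lia.
  - constructor.
  - constructor.
    + replace (S (pred d)) with (pred (S d)) by lia. apply IHwfT; auto; lia.
    + intro Hin.
      destruct (in_unguarded_tsubst T (S k) U 0 (unguarded_closed U HU) Hin)
        as [[|m] [Hm [Hmk Heq]]]; [contradiction|].
      destruct (Nat.ltb_spec (S k) (S m)); lia.
  - constructor.
    + destruct bs; simpl; congruence.
    + rewrite blabels_map; auto.
    + intros m S T Hin. apply in_map_branches in Hin as [T0 [Hin _]]. eauto.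
    + intros m S T Hin. apply in_map_branches in Hin as [T0 [Hin ->]]. eauto.
  - constructor.
    + destruct bs; simpl; congruence.
    + rewrite blabels_map; auto.
    + rewrite blabels_map; auto.
    + intros m S T Hin. apply in_map_branches in Hin as [T0 [Hin _]]. eauto.
    + intros m S T Hin. apply in_map_branches in Hin as [T0 [Hin ->]]. eauto.
Qed.

Lemma wfT_unfold_mu (T : stype Bs) : wfT 0 (TMu T) -> wfT 0 (unfold_mu T).
Proof.
  intro H. inversion H as [| |d T' HT _| |]; subst.
  exact (wfT_tsubst 1 T 0 (TMu T) HT Nat.lt_0_1 H).
Qed.

Lemma mu_depth_unfold_mu (T : stype Bs) :
  wfT 0 (TMu T) -> mu_depth (unfold_mu T) < mu_depth (TMu T).
Proof.
  intro H. inversion H as [| |d T' _ Hguard| |]; subst. simpl. unfold unfold_mu.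
  pose proof (mu_depth_tsubst T 0 (TMu T) Hguard). lia.
Qed.

End WellFormedUnfolding.

Section SubtypingTransitivity.

Context {Bs : basics}.

Definition subS_lift (R : stype Bs -> stype Bs -> Prop) (S S' : sort Bs) : Prop :=
  match S, S' with
  | SB b, SB b' => bsub Bs b b'
  | ST T, ST T' => R T T'
  | _, _ => False
  end.

Definition ext_crash_cond (bs bs' : list (label * sort Bs * stype Bs)) : Prop :=
  List.length bs = 1 ->
  (forall m S T, In (m, S, T) bs -> m <> crash) \/ incl (blabels bs') (blabels bs).

Inductive subT_step (R : stype Bs -> stype Bs -> Prop) : stype Bs -> stype Bs -> Prop :=
| step_end : subT_step R TEnd TEnd
| step_int p bs bs' :
    (forall m S' T', In (m, S', T') bs' ->
       exists S T, In (m, S, T) bs /\ subS_lift R S' S /\ R T T') ->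
    subT_step R (TInt p bs) (TInt p bs')
| step_ext p bs bs' :
    (forall m S T, In (m, S, T) bs ->
       exists S' T', In (m, S', T') bs' /\ subS_lift R S S' /\ R T T') ->
    ext_crash_cond bs bs' ->
    subT_step R (TExt p bs) (TExt p bs')
| step_mul T T' : R (unfold_mu T) T' -> subT_step R (TMu T) T'
| step_mur T T' : R T (unfold_mu T') -> subT_step R T (TMu T').

Lemma subT_coind (R : stype Bs -> stype Bs -> Prop) :
  (forall A C, R A C -> subT_step R A C) -> forall A C, R A C -> subT A C.
Proof.
  intros HR. cofix CH. intros A C H.
  destruct (HR A C H) as [|p bs bs' Hbr|p bs bs' Hbr Hcrash|T T' HT|T T' HT].
  - apply st_end.
  - apply st_int. intros m S' T' Hin.
    destruct (Hbr _ _ _ Hin) as (S & T & Hin0 & HS & HT).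
    exists S, T. split; [exact Hin0|split; [|exact (CH _ _ HT)]].
    destruct S', S; simpl in HS; try contradiction.
    + apply ss_b, HS.
    + apply ss_t, (CH _ _ HS).
  - apply st_ext; [|exact Hcrash]. intros m S T Hin.
    destruct (Hbr _ _ _ Hin) as (S' & T' & Hin0 & HS & HT).
    exists S', T'. split; [exact Hin0|split; [|exact (CH _ _ HT)]].
    destruct S, S'; simpl in HS; try contradiction.
    + apply ss_b, HS.
    + apply ss_t, (CH _ _ HS).
  - apply st_mul, (CH _ _ HT).
  - apply st_mur, (CH _ _ HT).
Qed.

Lemma subT_unfold_l (A X : stype Bs) : subT (TMu A) X -> subT (unfold_mu A) X.
Proof.
  revert A X. cofix CH. intros A X H. inversion H; subst.
  - assumption.
  - apply st_mur, CH. assumption.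
Qed.

Lemma subT_unfold_r (X B : stype Bs) : subT X (TMu B) -> subT X (unfold_mu B).
Proof.
  revert X B. cofix CH. intros X B H. inversion H; subst.
  - apply st_mul, CH. assumption.
  - assumption.
Qed.

(* Guarded recursion bounds the number of leading binders, so a well-formed
   middle type can be unfolded until its head is a choice or [end]. *)
Lemma subT_unrolled_middle (B A C : stype Bs) :
  wfT 0 B -> subT A B -> subT B C ->
  exists B0, mu_depth B0 = 0 /\ wfT 0 B0 /\ subT A B0 /\ subT B0 C.
Proof.
  induction B as [B IH] using (well_founded_induction (well_founded_ltof _ mu_depth)).
  intros W H1 H2. destruct (mu_depth B) eqn:D.
  { exists B. auto. }
  destruct B as [| |B'| |]; try discriminate.
  apply (IH (unfold_mu B')).
  - apply mu_depth_unfold_mu, W.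
  - apply wfT_unfold_mu, W.
  - apply subT_unfold_r, H1.
  - apply subT_unfold_l, H2.
Qed.

Lemma ext_crash_cond_trans (bs bs' bs'' : list (label * sort Bs * stype Bs)) :
  bs' <> [] -> NoDup (blabels bs') ->
  (forall m S T, In (m, S, T) bs -> exists S' T', In (m, S', T') bs') ->
  ext_crash_cond bs bs' -> ext_crash_cond bs' bs'' -> ext_crash_cond bs bs''.
Proof.
  intros Hne Hnd Hmap C1 C2 Hl.
  destruct (C1 Hl) as [Hnc|I1]; [left; exact Hnc|].
  assert (Hl' : List.length bs' = 1).
  { destruct bs as [|b [|b2 r]]; simpl in Hl; try discriminate.
    pose proof (NoDup_incl_length Hnd I1) as Hlen.
    unfold blabels in Hlen; rewrite !length_map in Hlen.
    destruct bs'; [congruence|simpl in *; lia]. }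
  destruct (C2 Hl') as [Hnc|I2].
  - left. intros m S T Hin. destruct (Hmap _ _ _ Hin) as (S' & T' & Hin'). eauto.
  - right. intros x Hx. auto.
Qed.

Hypothesis bsub_trans : forall a b c, bsub Bs a b -> bsub Bs b c -> bsub Bs a c.

Definition subT_via_wf (A C : stype Bs) : Prop :=
  exists B, wfT 0 B /\ subT A B /\ subT B C.

Lemma subS_via_wf (S1 S2 S3 : sort Bs) :
  wfS S2 -> subS S1 S2 -> subS S2 S3 -> subS_lift subT_via_wf S1 S3.
Proof.
  intros W H1 H2. destruct H1 as [b1 b2 Hb|T1 T2 HT]; inversion H2; subst; simpl.
  - eauto.
  - inversion W; subst. exists T2; auto.
Qed.

Lemma subT_via_wf_step_int p bsa bsb bsc :
  wfT 0 (TInt p bsb) -> subT (TInt p bsa) (TInt p bsb) -> subT (TInt p bsb) (TInt p bsc) ->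
  subT_step subT_via_wf (TInt p bsa) (TInt p bsc).
Proof.
  intros W H1 H2.
  inversion W as [| | | |d p' bs Hne Hnd Hnc HwS HwT]; subst.
  inversion H1 as [|p' bs bs' Hab| | |]; subst.
  inversion H2 as [|p' bs bs' Hbc| | |]; subst.
  apply step_int. intros m S'' T'' Hin.
  destruct (Hbc _ _ _ Hin) as (S' & T' & Hin' & HS1 & HT1).
  destruct (Hab _ _ _ Hin') as (S & T & Hin0 & HS2 & HT2).
  exists S, T. split; [exact Hin0|split].
  - eapply subS_via_wf; eauto.
  - exists T'. eauto.
Qed.

Lemma subT_via_wf_step_ext p bsa bsb bsc :
  wfT 0 (TExt p bsb) -> subT (TExt p bsa) (TExt p bsb) -> subT (TExt p bsb) (TExt p bsc) ->
  subT_step subT_via_wf (TExt p bsa) (TExt p bsc).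
Proof.
  intros W H1 H2.
  inversion W as [| | |d p' bs Hne Hnd HwS HwT|]; subst.
  inversion H1 as [| |p' bs bs' Hab Cab| |]; subst.
  inversion H2 as [| |p' bs bs' Hbc Cbc| |]; subst.
  apply step_ext.
  - intros m S T Hin.
    destruct (Hab _ _ _ Hin) as (S' & T' & Hin' & HS1 & HT1).
    destruct (Hbc _ _ _ Hin') as (S'' & T'' & Hin'' & HS2 & HT2).
    exists S'', T''. split; [exact Hin''|split].
    + eapply subS_via_wf; eauto.
    + exists T'. eauto.
  - apply (ext_crash_cond_trans bsa bsb bsc Hne Hnd); [|exact Cab|exact Cbc].
    intros m S T Hin. destruct (Hab _ _ _ Hin) as (S' & T' & Hin' & _). eauto.
Qed.

Lemma subT_via_wf_step (A C : stype Bs) :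
  subT_via_wf A C -> subT_step subT_via_wf A C.
Proof.
  intros (B & WB & HAB & HBC).
  destruct A as [pa bsa|pa bsa|A'|na|].
  3: { apply step_mul. exists B. auto using subT_unfold_l. }
  all: destruct C as [pc bsc|pc bsc|C'|nc|];
    try solve [apply step_mur; exists B; auto using subT_unfold_r].
  all: destruct (subT_unrolled_middle _ _ _ WB HAB HBC) as (B0 & D0 & W0 & HAB0 & HB0C);
    destruct B0 as [pb bsb|pb bsb|B0'|nb|]; simpl in D0; try discriminate;
    inversion HAB0; inversion HB0C; subst.
  - eapply subT_via_wf_step_ext; eauto.
  - eapply subT_via_wf_step_int; eauto.
  - apply step_end.
Qed.

Lemma subT_trans (A B C : stype Bs) : wfT 0 B -> subT A B -> subT B C -> subT A C.
Proof.
  intros W H1 H2. apply (subT_coind subT_via_wf subT_via_wf_step). exists B. auto.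
Qed.

Lemma subS_trans (A B C : sort Bs) : wfS B -> subS A B -> subS B C -> subS A C.
Proof.
  intros W H1 H2. destruct H1 as [b1 b2 Hb|T1 T2 HT]; inversion H2; subst.
  - apply ss_b. eauto.
  - apply ss_t. inversion W; subst. eapply subT_trans; eauto.
Qed.

End SubtypingTransitivity.

Lemma Forall2_nth_error_l {A B : Type} {R : A -> B -> Prop} {l l' i x} :
  Forall2 R l l' -> nth_error l i = Some x ->
  exists y, nth_error l' i = Some y /\ R x y.
Proof.
  intros H; revert i; induction H; intros [|i] Hn; simpl in *; try discriminate.
  - inversion Hn; subst; eauto.
  - eauto.
Qed.

Lemma Forall2_in_l {A B : Type} {R : A -> B -> Prop} {l l' x} :
  Forall2 R l l' -> In x l -> exists y, In y l' /\ R x y.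
Proof.
  induction 1 as [|x0 y0 l l' Hr _ IH]; simpl; [tauto|]. intros [<-|Hin].
  - eauto.
  - destruct (IH Hin) as (y & ? & ?). eauto.
Qed.

Lemma Forall2_concat_inv_r {A B : Type} {R : A -> B -> Prop} {Ls : list (list B)} {L} :
  Forall2 R L (List.concat Ls) ->
  exists Ls', L = List.concat Ls' /\ Forall2 (Forall2 R) Ls' Ls.
Proof.
  revert L; induction Ls as [|L0 Ls IH]; simpl; intros L H.
  - inversion H; subst. exists []. auto.
  - apply Forall2_app_inv_r in H as (L1 & L2 & H1 & H2 & ->).
    destruct (IH _ H2) as (Ls' & -> & HF). exists (L1 :: Ls'). simpl; auto.
Qed.

Lemma in_app_cons_iff_cancel {A : Type} (x : A) l1 l2 l :
  ~ In x (l1 ++ l2) -> ~ In x l ->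
  (forall y, In y (l1 ++ x :: l2) <-> In y (x :: l)) ->
  forall y, In y (l1 ++ l2) <-> In y l.
Proof.
  intros Hx Hl H y. split; intro Hy.
  - assert (Hy' : In y (x :: l)) by (apply H; rewrite in_app_iff in *; simpl; tauto).
    destruct Hy' as [<-|Hy']; [contradiction|exact Hy'].
  - assert (Hy' : In y (l1 ++ x :: l2)) by (apply H; right; exact Hy).
    rewrite in_app_iff in *; simpl in Hy'. destruct Hy' as [|[<-|]]; tauto.
Qed.

Section Narrowing.

Context {Bs : basics}.
Variable safe : session -> ctx Bs -> Prop.
Hypothesis bsub_trans : forall a b c, bsub Bs a b -> bsub Bs b c -> bsub Bs a c.

Definition wfC (t : cty Bs) : Prop :=
  match t with CS s => wfS s | CStop => True end.

(* Unchanged entries are admitted separately: they arise for the local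
   extensions of contexts in the typing rules, where no reflexivity of
   [subT] is available. *)
Definition narrow_entry (a b : chan * cty Bs) : Prop :=
  fst a = fst b /\ (snd a = snd b \/ subC (snd a) (snd b) /\ wfC (snd b)).

Definition ctx_narrow (G' G : ctx Bs) : Prop :=
  exists G'', Permutation G' G'' /\ Forall2 narrow_entry G'' G.

Lemma narrow_entry_refl (a : chan * cty Bs) : narrow_entry a a.
Proof. split; auto. Qed.

Lemma ctx_narrow_of_Forall2 (G' G : ctx Bs) :
  Forall2 narrow_entry G' G -> ctx_narrow G' G.
Proof. intros HF. exists G'. auto. Qed.

Lemma ctx_narrow_app_r (G' G D : ctx Bs) :
  ctx_narrow G' G -> ctx_narrow (G' ++ D) (G ++ D).
Proof.
  intros (G'' & Hp & HF). exists (G'' ++ D). split.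
  - apply Permutation_app_tail, Hp.
  - apply Forall2_app; [exact HF|].
    induction D; constructor; auto using narrow_entry_refl.
Qed.

Lemma dom_narrow {G' G : ctx Bs} : Forall2 narrow_entry G' G -> dom G' = dom G.
Proof. induction 1 as [|a b G' G [Hab _] _ IH]; simpl; congruence. Qed.

Lemma dom_ctx_narrow {G' G : ctx Bs} :
  ctx_narrow G' G -> Permutation (dom G') (dom G).
Proof.
  intros (G'' & Hp & HF). rewrite <- (dom_narrow HF). apply Permutation_map, Hp.
Qed.

Lemma ctx_union_narrow {G G' : ctx Bs} {Gs} :
  ctx_union G Gs -> ctx_narrow G' G ->
  exists Gs', ctx_union G' Gs' /\ Forall2 (Forall2 narrow_entry) Gs' Gs.
Proof.
  intros [Hnd Hp] (G'' & Hp' & HF).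
  destruct (Permutation_Forall2 Hp (Forall2_flip HF)) as (L & HpL & HFL).
  apply Forall2_flip in HFL.
  destruct (Forall2_concat_inv_r HFL) as (Gs' & -> & HGs).
  exists Gs'. split; [split|exact HGs].
  - rewrite (dom_narrow HFL). exact Hnd.
  - eapply Permutation_trans; eauto.
Qed.

Lemma is_end_narrow (t' t : cty Bs) :
  t' = t \/ subC t' t /\ wfC t -> is_end t -> is_end t'.
Proof.
  intros [->|[Hs W]] He; auto.
  destruct Hs as [S1 S2 [b1 b2 Hb|T1 T2 HT]|]; simpl in *; auto.
  inversion W; subst. eapply subT_trans; eauto.
Qed.

Lemma end_ctx_narrow (G' G : ctx Bs) : ctx_narrow G' G -> end_ctx G -> end_ctx G'.
Proof.
  intros (G'' & Hp & HF) He c t' Hin.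
  apply (Permutation_in _ Hp) in Hin.
  destruct (Forall2_in_l HF Hin) as ([c0 t] & Hin0 & _ & Hr).
  eapply is_end_narrow; eauto.
Qed.

Lemma typd_narrow (G' G : ctx Bs) d S :
  typd G d S -> Forall2 narrow_entry G' G -> typd G' d S.
Proof.
  intros Ht HF. destruct Ht as [v b Hv|c S0 S Hs].
  - inversion HF; subst. constructor; auto.
  - inversion HF as [|[c' t'] y l' l [Hc Hr] Hnil]; subst.
    inversion Hnil; subst. simpl in *; subst.
    destruct Hr as [->|[Hs' W]].
    + constructor; auto.
    + inversion Hs'; subst. constructor. eapply subS_trans; eauto.
Qed.

Theorem typ_narrow Th (G : ctx Bs) P :
  typ safe Th G P -> forall G', ctx_narrow G' G -> typ safe Th G' P.
Proof.
  induction 1 as [Th G Hnd He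
                 |Th G G0 s p He HU
                 |Th G G1 G2 P1 P2 _ IH1 _ IH2 HU
                 |Th G G0 G1 G2 c q m S T d P Hc Wc Hd HS _ IH HU
                 |Th G G0 G1 c q tbs pbs Hc Wc Hlen Hlab _ IH HU
                 |Th G X params P Q HX Wp HP _ _ IHQ
                 |Th G X Ss G0 Gs ds HX He Hlen1 Hlen2 Hargs HU
                 |Th G s D P HD WD Hsafe Hfresh _ IH];
    intros G' HN.
  - constructor.
    + exact (Permutation_NoDup (Permutation_sym (dom_ctx_narrow HN)) Hnd).
    + eapply end_ctx_narrow; eauto.
  - destruct (ctx_union_narrow HU HN) as (Gs' & HU' & HGs).
    inversion HGs as [|G0' ? ? ? HG0 HGs1]; subst.
    inversion HGs1 as [|Gp ? ? ? HGp HGs2]; subst. inversion HGs2; subst.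
    inversion HGp as [|[c' t'] ? ? ? [Hc Ht] Hnil]; subst. inversion Hnil; subst.
    simpl in Hc, Ht; subst c'.
    assert (t' = CStop) as -> by (destruct Ht as [->|[Hs _]]; [|inversion Hs]; auto).
    eapply t_crashed; [|exact HU'].
    eapply end_ctx_narrow; [apply ctx_narrow_of_Forall2, HG0 | exact He].
  - destruct (ctx_union_narrow HU HN) as (Gs' & HU' & HGs).
    inversion HGs as [|G1' ? ? ? HG1 HGs1]; subst.
    inversion HGs1 as [|G2' ? ? ? HG2 HGs2]; subst. inversion HGs2; subst.
    eapply t_par; [apply IH1 | apply IH2 | exact HU']; apply ctx_narrow_of_Forall2; assumption.
  - destruct (ctx_union_narrow HU HN) as (Gs' & HU' & HGs).
    inversion HGs as [|G0' ? ? ? HG0 HGs1]; subst.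
    inversion HGs1 as [|G1' ? ? ? HG1 HGs2]; subst.
    inversion HGs2 as [|G2' ? ? ? HG2 HGs3]; subst. inversion HGs3; subst.
    eapply t_send; [eapply typd_narrow; eauto | exact Wc | eapply typd_narrow; eauto
                   | exact HS | | exact HU'].
    apply IH, ctx_narrow_of_Forall2, Forall2_cons; [apply narrow_entry_refl | exact HG0].
  - destruct (ctx_union_narrow HU HN) as (Gs' & HU' & HGs).
    inversion HGs as [|G0' ? ? ? HG0 HGs1]; subst.
    inversion HGs1 as [|G1' ? ? ? HG1 HGs2]; subst. inversion HGs2; subst.
    eapply t_branch; [eapply typd_narrow; eauto | exact Wc | exact Hlen | exact Hlab | | exact HU'].
    intros i m' y P' m'' S T Hp Ht.
    eapply IH, ctx_narrow_of_Forall2; [exact Hp | exact Ht |].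
    repeat apply Forall2_cons; auto using narrow_entry_refl.
  - eapply t_def; eauto.
  - destruct (ctx_union_narrow HU HN) as (Gs' & HU' & HGs).
    inversion HGs as [|G0' Gs1' ? ? HG0 HGs1]; subst.
    eapply t_call; [exact HX | | exact Hlen1 | | | exact HU'].
    + eapply end_ctx_narrow; [apply ctx_narrow_of_Forall2, HG0 | exact He].
    + rewrite <- Hlen2. exact (Forall2_length HGs1).
    + intros i Gi d S HGi Hd HS.
      destruct (Forall2_nth_error_l HGs1 HGi) as (Gi0 & HGi0 & HF).
      destruct (Hargs _ _ _ _ HGi0 Hd HS) as [Htd Hne].
      split; [eapply typd_narrow; eauto | exact Hne].
  - eapply t_res; [exact HD | exact WD | exact Hsafe | |].
    + intros p Hin. apply (Hfresh p).
      exact (Permutation_in _ (dom_ctx_narrow HN) Hin).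
    + apply IH, ctx_narrow_app_r, HN.
Qed.

Lemma ctx_sub_narrow (G' G : ctx Bs) :
  ctx_sub G' G -> (forall c t, In (c, t) G -> wfC t) -> ctx_narrow G' G.
Proof.
  revert G'; induction G as [|[c t] G IH]; intros G' (N1 & N2 & Hd & Hs) Hw.
  - destruct G' as [|[c' t'] G'].
    + exists []. auto.
    + exfalso. apply (proj1 (Hd c')). left. reflexivity.
  - assert (Hc : In c (dom G')) by (apply Hd; left; reflexivity).
    apply in_map_iff in Hc as [[c1 t'] [Hc1 Hin]]. simpl in Hc1; subst c1.
    apply in_split in Hin as (X & Y & ->).
    unfold dom in N1, N2, Hd. rewrite map_app in N1, Hd. simpl in N1, N2, Hd.
    inversion N2 as [|? ? Hc2 N2']; subst.
    destruct (IH (X ++ Y)) as (G'' & Hp & HF).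
    + unfold ctx_sub, dom. rewrite map_app. split; [|split; [|split]].
      * eapply NoDup_remove_1; eauto.
      * exact N2'.
      * apply (in_app_cons_iff_cancel c); auto. eapply NoDup_remove_2; eauto.
      * intros c0 t0' t0 H1 H2. eapply Hs; [|right; exact H2].
        apply in_app_or in H1 as [?|?]; auto with datatypes.
    + intros c0 t0 H. eapply Hw. right. eauto.
    + exists ((c, t') :: G''). split.
      * eapply Permutation_trans; [apply Permutation_sym, Permutation_middle|]. auto.
      * constructor; auto. split; auto. right. split.
        -- eapply Hs; [auto with datatypes | left; reflexivity].
        -- eapply Hw. left. reflexivity.
Qed.

Lemma ctx_wf_entries (G : ctx Bs) : ctx_wf G -> forall c t, In (c, t) G -> wfC t.
Proof.
  intros [_ Hw] c t Hin.
  destruct (Hw c t Hin) as [(x & S & _ & -> & W)|[(s & p & T & _ & -> & W)|(s & p & _ & ->)]];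
    simpl; auto using wfS_t.
Qed.

End Narrowing.

Theorem mainTheorem4 (Bs : basics) (safe : session -> ctx Bs -> Prop)
  (bsub_trans : forall a b c, bsub Bs a b -> bsub Bs b c -> bsub Bs a c)
  (Th : theta Bs) (G G' : ctx Bs) (P : proc Bs) :
  theta_wf Th -> ctx_wf G -> ctx_wf G' ->
  typ safe Th G P -> ctx_sub G' G -> typ safe Th G' P.
Proof.
  intros _ HwG _ Ht Hsub.
  eapply typ_narrow; [exact bsub_trans | exact Ht |].
  apply ctx_sub_narrow; [exact Hsub | apply ctx_wf_entries, HwG].
Qed.
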